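(* Let $R$ be a ringed tree with at least $\ell+1$ levels, where $\ell\ge 2$, and let $u_1,u_2,\dots,u_{2^\ell}$ be the vertices of level $\ell$ in their cyclic order along the level-$\ell$ cycle. Then for every tree decomposition $(T,\phi)$ of $R$ there exist a node $w\in V(T)$ and indices $i<j$ with $u_i,u_j\in\phi^{-1}(w)$ and $\min\{j-i,\ 2^\ell+i-j\}\ge 2^{\ell-2}$.
   Context: A ringed tree with levels $0,1,\dots,L$ has vertices $v_{k,j}$ for $0\le k\le L$, $1\le j\le 2^k$; its edges are the edges of the complete binary tree ($v_{k,j}$ adjacent to $v_{k+1,2j-1}$ and $v_{k+1,2j}$) together with, for each level $k$, the cycle $v_{k,1}v_{k,2}\cdots v_{k,2^k}v_{k,1}$ joining consecutive vertices of that level. A tree decomposition of a graph $H$ is a pair $(T,\phi)$ where $T$ is a tree and $\phi$ assigns to each vertex $x$ of $H$ a (nonempty) subtree $\phi(x)$ of $T$ such that $\phi(x)\cap\phi(y)\ne\emptyset$ whenever $xy\in E(H)$; for a node $t$ of $T$, $\phi^{-1}(t)=\{x\in V(H): t\in\phi(x)\}$. *)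

From mathcomp Require Import all_boot.
Set Implicit Arguments. Unset Strict Implicit. Unset Printing Implicit Defensive.

(* Vertices of the ringed tree with levels 0..L are encoded as pairs (k, j)
   of naturals, 0-indexed in j: (k, j) stands for v_{k, j+1}.  A pair is a
   vertex iff k <= L and j < 2^k. *)
Definition rt_vertex (L : nat) (x : nat * nat) : bool :=
  (x.1 <= L) && (x.2 < 2 ^ x.1).

(* Directed version of the edges: binary tree edges (v_{k,j} -> its two
   children) and level-cycle edges (v_{k,j} -> v_{k,j+1 mod 2^k}). *)
Definition rt_edge_dir (x y : nat * nat) : bool :=
  ((y.1 == x.1.+1) && ((y.2 == 2 * x.2) || (y.2 == (2 * x.2).+1)))
  || ((y.1 == x.1) && (y.2 == x.2.+1 %% 2 ^ x.1)).

Definition rt_adj (L : nat) (x y : nat * nat) : bool :=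
  [&& rt_vertex L x, rt_vertex L y & (rt_edge_dir x y || rt_edge_dir y x)].

Definition is_tree (T : finType) (e : rel T) : Prop :=
  [/\ 0 < #|T|,
      (forall x, ~~ e x x),
      (forall x y, e x y = e y x),
      (forall x y, connect e x y) &
      (forall p : seq T, uniq p -> 3 <= size p -> ~~ cycle e p)].

Definition induced (T : finType) (e : rel T) (S : {set T}) : rel T :=
  [rel a b | [&& e a b, a \in S & b \in S]].

Definition is_subtree (T : finType) (e : rel T) (S : {set T}) : Prop :=
  S != set0 /\ (forall x y, x \in S -> y \in S -> connect (induced e S) x y).

Definition tree_decomp (L : nat) (T : finType) (e : rel T)
    (phi : nat * nat -> {set T}) : Prop :=
  [/\ is_tree e,
      (forall x, rt_vertex L x -> is_subtree e (phi x)) &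
      (forall x y, rt_adj L x y -> phi x :&: phi y != set0)].

From mathcomp Require Import all_boot zify.
Set Implicit Arguments. Unset Strict Implicit. Unset Printing Implicit Defensive.

(* Cut the level-ell cycle, of length n = 2^ell, into three consecutive arcs
   of lengths d = 2^(ell-2), d and n - 2d.  The bags of the vertices of an arc
   form a subtree of T, since consecutive bags meet, and for the same reason
   any two of the three arcs meet.  By the Helly property of subtrees of a
   tree the three arc subtrees share a node w, which lies in one bag from each
   arc; as n >= 3d, two of these three vertices are at cyclic distance at
   least d. *)

Section AcyclicPaths.

Variables (T : eqType) (e : rel T).
Hypothesis e_sym : symmetric e.
Hypothesis e_acyclic : forall p : seq T, uniq p -> 3 <= size p -> ~~ cycle e p.

Lemma path_rev_sym x p z : path e x (rcons p z) -> path e z (rev (x :: p)).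
Proof.
move=> exp; have := rev_path e x (rcons p z).
rewrite last_rcons belast_rcons => ->.
by rewrite (eq_path (e' := e)) // => a b; rewrite e_sym.
Qed.

Lemma no_two_branches x z p q :
  path e x (rcons p z) -> path e x (rcons q z) ->
  uniq (x :: rcons p z) -> uniq (x :: rcons q z) -> ~~ has (mem q) p ->
  (p != [::]) || (q != [::]) -> False.
Proof.
move=> exp exq Uxpz Uxqz disj pq_ne.
have cyc : cycle e (x :: p ++ z :: rev q).
  rewrite /= rcons_cat /= -rev_cons cat_path.
  by move: exp; rewrite rcons_path /= => /andP[-> ->]; apply: path_rev_sym.
have perm : perm_eq (x :: rcons p z ++ q) (x :: p ++ z :: rev q).
  by rewrite perm_cons cat_rcons perm_cat2l perm_cons perm_sym perm_rev.
apply: (negP (e_acyclic _ _)) cyc.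
  rewrite -(perm_uniq perm) -cat_cons cat_uniq Uxpz; move: Uxqz; rewrite /= mem_rcons !inE.
  rewrite negb_or rcons_uniq => /andP[/andP[xz xq] /andP[zq ->]]; rewrite andbT.
  apply/hasPn => t tq; rewrite !inE mem_rcons !inE.
  rewrite !negb_or; apply/and3P; split.
  - by apply: contraNneq xq => <-.
  - by apply: contraNneq zq => <-.
  - by apply: contraL tq => tp; move/hasPn: disj; apply.
by move: pq_ne; rewrite /= size_cat /= size_rev -!size_eq0; lia.
Qed.

Lemma uniq_path_unique p : forall x q,
  path e x p -> path e x q -> uniq (x :: p) -> uniq (x :: q) ->
  last x p = last x q -> p = q.
Proof.
elim: p => [|a p IH] x [|b q] //.
- by move=> _ _ _ /andP[xbq _] /= eq_last; rewrite eq_last mem_last in xbq.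
- by move=> _ _ /andP[xap _] _ /= eq_last; rewrite -eq_last mem_last in xap.
move=> xap xbq Uxap Uxbq /= eq_last.
have [eq_ab|neq_ab] := eqVneq a b.
  subst b; move: xap xbq Uxap Uxbq => /andP[_ ?] /andP[_ ?] /andP[_ ?] /andP[_ ?].
  by rewrite (IH a q).
have meet : has (mem (b :: q)) (a :: p).
  by apply/hasP; exists (last a p); rewrite ?mem_last //= eq_last mem_last.
exfalso; have : head x (a :: p) != head x (b :: q) := neq_ab.
case/split_find: meet xap Uxap => z p1 p2 zbq disj.
case/splitPr: zbq disj xbq Uxbq => q1 q2 disj.
rewrite -cat_rcons !cat_path -!cat_cons !cat_uniq.
move=> /andP[exq1 _] /andP[Uxq1 _] /andP[exp1 _] /andP[Uxp1 _] neq_head.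
apply: (no_two_branches exp1 exq1 Uxp1 Uxq1).
  apply: contra disj => /hasP[t tp1 tq1]; apply/hasP; exists t => //.
  by rewrite inE mem_cat; apply/orP; left.
by apply: contraNT neq_head; case: p1 q1 {exp1 Uxp1 exq1 Uxq1 disj} => [|? ?] [|? ?].
Qed.

End AcyclicPaths.

Definition connected_set (T : finType) (e : rel T) (S : {set T}) :=
  forall x y, x \in S -> y \in S -> connect (induced e S) x y.

Lemma path_exit_edge (T : eqType) (e : rel T) (P : pred T) x p :
  path e x p -> P x -> ~~ P (last x p) ->
  exists x' y', [/\ e x' y', P x', ~~ P y', x' \in x :: p & y' \in p].
Proof.
elim: p x => [|a p IH] x /=; first by move=> _ ->.
move=> /andP[exa pa] Px; have [Pa|nPa] := boolP (P a).
  case/(IH a pa Pa) => x' [y' [? ? ? x'ap y'p]].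
  by exists x', y'; rewrite inE x'ap inE y'p !orbT.
by exists x, a; rewrite exa Px nPa !inE !eqxx.
Qed.

Section Subtrees.

Variables (T : finType) (e : rel T).

Lemma path_of_induced (S : {set T}) x p :
  path (induced e S) x p -> path e x p && all (mem S) p.
Proof.
elim: p x => [|a p IH] x //= /andP[/and3P[-> _ aS] /IH /andP[-> ->]].
by rewrite aS.
Qed.

Lemma connected_set_uniq_path (S : {set T}) x y :
  connected_set e S -> x \in S -> y \in S ->
  exists p, [/\ path e x p, last x p = y, uniq (x :: p) & all (mem S) p].
Proof.
move=> conS xS yS; case/connectP: (conS x y xS yS) => p xp ->.
case: (shortenP xp) => p' xp' Uxp' _.
by case/andP: (path_of_induced xp') => ? ?; exists p'.
Qed.

Lemma connect_induced_sub (A B : {set T}) x y :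
  A \subset B -> connect (induced e A) x y -> connect (induced e B) x y.
Proof.
move=> sAB; apply: connect_sub => u v /and3P[euv uA vA].
by apply: connect1; rewrite /induced /= euv !(subsetP sAB).
Qed.

Lemma connected_setU (A B : {set T}) :
  connected_set e A -> connected_set e B -> A :&: B != set0 ->
  connected_set e (A :|: B).
Proof.
move=> conA conB /set0Pn[c]; rewrite inE => /andP[cA cB].
have to_c u : u \in A :|: B ->
    connect (induced e (A :|: B)) u c /\ connect (induced e (A :|: B)) c u.
  case/setUP=> [uA|uB]; split.
  - exact: connect_induced_sub (subsetUl A B) (conA _ _ uA cA).
  - exact: connect_induced_sub (subsetUl A B) (conA _ _ cA uA).
  - exact: connect_induced_sub (subsetUr A B) (conB _ _ uB cB).
  - exact: connect_induced_sub (subsetUr A B) (conB _ _ cB uB).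
by move=> x y /to_c[xc _] /to_c[_ cy]; apply: connect_trans xc cy.
Qed.

Hypothesis e_sym : symmetric e.
Hypothesis e_acyclic : forall p : seq T, uniq p -> 3 <= size p -> ~~ cycle e p.

Lemma uniq_path_in_connected_set (S : {set T}) x q :
  connected_set e S -> x \in S -> last x q \in S -> path e x q -> uniq (x :: q) ->
  all (mem S) q.
Proof.
move=> conS xS yS xq Uxq.
have [p [xp eq_last Uxp pS]] := connected_set_uniq_path conS xS yS.
by rewrite -(uniq_path_unique e_sym e_acyclic xp xq Uxp Uxq eq_last).
Qed.

Lemma subtree_helly (A B C : {set T}) :
  connected_set e A -> connected_set e B -> connected_set e C ->
  A :&: B != set0 -> B :&: C != set0 -> C :&: A != set0 ->
  A :&: B :&: C != set0.
Proof.
move=> conA conB conC /set0Pn[c] /setIP[cA cB] /set0Pn[a] /setIP[aB aC].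
move=> /set0Pn[b] /setIP[bC bA].
have [bB|nbB] := boolP (b \in B); first by apply/set0Pn; exists b; rewrite !inE bA bB bC.
(* The path in C from a to b stays in A :|: B; where it leaves B, along an
   edge x y, y lies in A.  If x were outside A, then y x followed by the path
   in B from x to c would be the path in T between two vertices of A, hence
   would lie in A. *)
have [P [aP lastP UaP PC]] := connected_set_uniq_path conC aC bC.
have PAB : all (mem (A :|: B)) P.
  apply: (uniq_path_in_connected_set (connected_setU conA conB _)) aP UaP.
  - by apply/set0Pn; exists c; rewrite inE cA cB.
  - by rewrite inE aB orbT.
  - by rewrite lastP inE bA.
have lastP_notB : last a P \notin B by rewrite lastP.
have [x [y [exy xB nyB xaP yP]]] := path_exit_edge (P := [in B]) aP aB lastP_notB.
have xC : x \in C by move: xaP; rewrite inE => /predU1P[->|/(allP PC)].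
have yA : y \in A by have := allP PAB y yP; rewrite !inE (negbTE nyB) orbF.
have [xA|nxA] := boolP (x \in A); first by apply/set0Pn; exists x; rewrite !inE xA xB xC.
have [Q [xQ lastQ UxQ QB]] := connected_set_uniq_path conB xB cB.
have: all (mem A) (x :: Q).
  apply: (uniq_path_in_connected_set conA yA).
  - by rewrite /= lastQ.
  - by rewrite /= e_sym exy.
  rewrite cons_uniq UxQ andbT inE negb_or; apply/andP; split.
    by apply: contraNneq nyB => ->.
  by apply: contra nyB => /(allP QB).
by rewrite /= (negbTE nxA).
Qed.

End Subtrees.

Section CyclicChainOfSubtrees.

Variables (T : finType) (e : rel T).
Hypothesis e_sym : symmetric e.
Hypothesis e_acyclic : forall p : seq T, uniq p -> 3 <= size p -> ~~ cycle e p.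

Variables (B : nat -> {set T}) (n : nat).
Hypothesis B_connected : forall i, i < n -> connected_set e (B i).
Hypothesis B_meet : forall i, i < n -> B i :&: B (i.+1 %% n) != set0.

Definition arc m k := [set t | has (fun i => t \in B i) (iota m k)].

Lemma arcP m k t :
  reflect (exists2 i, m <= i < m + k & t \in B i) (t \in arc m k).
Proof.
rewrite inE; apply: (iffP hasP) => [[i] | [i]].
- by rewrite mem_iota => ik tBi; exists i.
- by move=> ik tBi; exists i; rewrite ?mem_iota.
Qed.

Lemma arcs_meet i m k m' k' :
  i < n -> m <= i < m + k -> m' <= i.+1 %% n < m' + k' ->
  arc m k :&: arc m' k' != set0.
Proof.
move=> lt_in ik ik'; case/set0Pn: (B_meet lt_in) => t /setIP[tBi tBi'].
by apply/set0Pn; exists t; apply/setIP; split; apply/arcP; [exists i | exists (i.+1 %% n)].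
Qed.

Lemma arc1 m : arc m 1 = B m.
Proof. by apply/setP => t; rewrite inE /= orbF. Qed.

Lemma arcS m k : arc m k.+1 = B m :|: arc m.+1 k.
Proof. by apply/setP => t; rewrite !inE. Qed.

Lemma connected_arc m k : 0 < k -> m + k <= n -> connected_set e (arc m k).
Proof.
elim: k m => [//|[|k] IH] m _ le_mk_n.
  by rewrite arc1; apply: B_connected; lia.
rewrite arcS; apply: connected_setU; first by apply: B_connected; lia.
  by apply: IH; lia.
by rewrite -arc1; apply: (@arcs_meet m); rewrite ?modn_small; lia.
Qed.

Lemma cyclic_chain_far_pair d :
  0 < d -> 3 * d <= n ->
  exists w i j, [/\ i < j, j < n, w \in B i, w \in B j &
                    d <= minn (j - i) (n + i - j)].
Proof.
move=> d_gt0 le_3d_n.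
have conA : connected_set e (arc 0 d) by apply: connected_arc; lia.
have conB : connected_set e (arc d d) by apply: connected_arc; lia.
have conC : connected_set e (arc (2 * d) (n - 2 * d)) by apply: connected_arc; lia.
have AB : arc 0 d :&: arc d d != set0 by apply: (@arcs_meet d.-1); rewrite ?modn_small; lia.
have BC : arc d d :&: arc (2 * d) (n - 2 * d) != set0.
  by apply: (@arcs_meet (2 * d).-1); rewrite ?modn_small; lia.
have CA : arc (2 * d) (n - 2 * d) :&: arc 0 d != set0.
  by apply: (@arcs_meet n.-1); rewrite ?prednK ?modnn; lia.
case/set0Pn: (subtree_helly e_sym e_acyclic conA conB conC AB BC CA) => w.
case/setIP => /setIP[/arcP[x x_in wx] /arcP[y y_in wy]] /arcP[z z_in wz].
exists w; have [far_xy|near_xy] := leqP d (y - x); first by exists x, y; split => //; lia.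
have [far_yz|near_yz] := leqP d (z - y); first by exists y, z; split => //; lia.
by exists x, z; split => //; lia.
Qed.

End CyclicChainOfSubtrees.

Theorem mainTheorem3 (L ell : nat) (hell : 2 <= ell) (hL : ell <= L)
    (T : finType) (e : rel T) (phi : nat * nat -> {set T}) :
  tree_decomp L e phi ->
  exists w : T, exists i j : nat,
    [/\ i < j, j < 2 ^ ell, w \in phi (ell, i), w \in phi (ell, j) &
        2 ^ (ell - 2) <= minn (j - i) (2 ^ ell + i - j)].
Proof.
case=> [[_ _ e_sym _ e_acyclic] bag_subtree bags_meet].
have level_vertex i : i < 2 ^ ell -> rt_vertex L (ell, i) by rewrite /rt_vertex /= hL => ->.
apply: (cyclic_chain_far_pair e_sym e_acyclic (B := fun i => phi (ell, i))).
- by move=> i /level_vertex /bag_subtree[].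
- move=> i lt_i; apply: bags_meet; rewrite /rt_adj !level_vertex ?ltn_pmod ?expn_gt0 //=.
  by rewrite /rt_edge_dir /= !eqxx /= orbT.
- by rewrite expn_gt0.
- by rewrite -[in leqRHS](subnK hell) expnD; lia.
Qed.
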